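(* An eventually dendric shift space is minimal if and only if it is irreducible.
   Context: $A$ is a finite alphabet; a shift space is a closed subset $X\subseteq A^{\mathbb Z}$ with $\sigma(X)=X$; $\mathcal L(X)$ is its set of finite factors. $X$ is irreducible if for all $u,v\in\mathcal L(X)$ there is $w$ with $uwv\in\mathcal L(X)$. A nonempty shift space is minimal if it contains no nonempty shift space other than itself. For $w\in\mathcal L(X)$, the extension graph $\mathcal E_1(w)$ is the undirected bipartite graph with vertex set the disjoint union of $\{a\in A: aw\in\mathcal L(X)\}$ and $\{b\in A: wb\in\mathcal L(X)\}$, with an edge $(a,b)$ iff $awb\in\mathcal L(X)$; $X$ is eventually dendric if for some $m\ge0$, $\mathcal E_1(w)$ is a tree for every $w\in\mathcal L(X)$ of length $\ge m$. *)

From HB Require Import structures.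
From mathcomp Require Import all_boot all_order all_algebra.
Set Implicit Arguments. Unset Strict Implicit. Unset Printing Implicit Defensive.
Import GRing.Theory Num.Theory.
Local Open Scope ring_scope.

Section Shifts.
Variable A : finType.

Definition shift (x : int -> A) : int -> A := fun n => x (n + 1).

(* closed for the product topology: a point all of whose central windows
   x_[-n,n] are windows of points of X belongs to X *)
Definition closed_set (X : (int -> A) -> Prop) : Prop :=
  forall x : int -> A,
    (forall n : nat, exists y, X y /\ forall i : int, `|i|%N <= n -> y i = x i)%N ->
    X x.

Definition shift_invariant (X : (int -> A) -> Prop) : Prop :=
  (forall x, X x -> X (shift x)) /\
  (forall y, X y -> exists x, X x /\ shift x = y).

Definition shift_space (X : (int -> A) -> Prop) : Prop :=
  closed_set X /\ shift_invariant X.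

Definition factor (x : int -> A) (i : int) (n : nat) : seq A :=
  [seq x (i + k%:Z) | k <- iota 0 n].

Definition lang (X : (int -> A) -> Prop) (w : seq A) : Prop :=
  exists x, exists i : int, X x /\ w = factor x i (size w).

Definition irreducible (X : (int -> A) -> Prop) : Prop :=
  forall u v, lang X u -> lang X v -> exists w, lang X (u ++ w ++ v).

Definition minimal (X : (int -> A) -> Prop) : Prop :=
  (exists x, X x) /\
  forall Y : (int -> A) -> Prop, shift_space Y -> (exists y, Y y) ->
    (forall y, Y y -> X y) -> forall x, X x -> Y x.

(* Extension graph E_1(w): vertices inl a (left extensions a) and
   inr b (right extensions b), edge between inl a and inr b iff awb in L(X). *)
Definition ext_vertex (X : (int -> A) -> Prop) (w : seq A) (u : A + A) : Prop :=
  match u with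
  | inl a => lang X (a :: w)
  | inr b => lang X (rcons w b)
  end.

Definition ext_edge (X : (int -> A) -> Prop) (w : seq A) (u v : A + A) : Prop :=
  match u, v with
  | inl a, inr b => lang X (a :: rcons w b)
  | inr b, inl a => lang X (a :: rcons w b)
  | _, _ => False
  end.
End Shifts.

Section Graphs.
Variable T : eqType.
Variables (V : T -> Prop) (E : T -> T -> Prop).

Fixpoint walk (x : T) (s : seq T) : Prop :=
  match s with
  | [::] => True
  | y :: s' => E x y /\ walk y s'
  end.

Definition connected_graph : Prop :=
  forall u v, V u -> V v -> exists s, walk u s /\ last u s = v.

Definition acyclic_graph : Prop :=
  ~ exists (x : T) (s : seq T),
      uniq (x :: s) /\ (2 <= size s)%N /\ walk x (rcons s x).

Definition is_tree : Prop := connected_graph /\ acyclic_graph.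
End Graphs.

Definition eventually_dendric (A : finType) (X : (int -> A) -> Prop) : Prop :=
  exists m : nat, forall w : seq A, lang X w -> (m <= size w)%N ->
    is_tree (ext_vertex X w) (ext_edge X w).

(* Minimal => irreducible: if u occurs in x, the omega-limit set of x (the points all of
   whose central windows recur arbitrarily far to the right in x) is a nonempty subshift of
   X, so by minimality it contains every point; hence every v of L(X) occurs to the right of
   u in x.
   Irreducible => minimal: it suffices that the language F of any point y of X is the whole
   language L = L(X).  Otherwise let p(n) be the complexity of F, s(n) = p(n+1) - p(n), and
   M(n) the number of extensions in L \ F of the words of F of length n.  For long w in F
   the extension graph E_1(w) is a forest, and so is its subgraph on the extensions lying
   in F; counting edges against vertices in both forests and summing over w gives
   M(n+1) + N(n) + 2 (s(n+1) - s(n)) <= M(n), where N(n) counts the edges (a, b) of the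
   graphs E_1(w) with aw and wb outside F.  Irreducibility yields such edges for
   arbitrarily long w (take a maximal F-window of u z w z' u), so the nonnegative
   potential M(n) + 2 s(n) decreases infinitely often, which is absurd. *)

From mathcomp Require Import all_boot all_order all_algebra zify.
From mathcomp Require Import boolp.
Set Implicit Arguments. Unset Strict Implicit. Unset Printing Implicit Defensive.
Import Order.TTheory.

Section Walks.
Variable T : eqType.

Lemma walk_cat (E : T -> T -> Prop) x s t :
  walk E x (s ++ t) <-> walk E x s /\ walk E (last x s) t.
Proof. by elim: s x => [|y s IH] x /=; [tauto | rewrite IH; tauto]. Qed.

Lemma sub_walk (E E' : T -> T -> Prop) :
  (forall x y, E x y -> E' x y) -> forall x s, walk E x s -> walk E' x s.
Proof. by move=> EE' x s; elim: s x => [|y s IH] x //= [/EE' ? /IH]. Qed.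

Lemma sub_acyclic (E E' : T -> T -> Prop) :
  (forall x y, E x y -> E' x y) -> acyclic_graph E' -> acyclic_graph E.
Proof.
move=> EE' acyc' [x [s [uniq_xs [size_s cycle_xs]]]]; apply: acyc'.
by exists x, s; split; [|split; last exact: sub_walk cycle_xs].
Qed.

End Walks.

Section Leaf.
Variables (T : finType) (E : T -> T -> Prop).
Hypotheses (E_sym : forall x y, E x y -> E y x) (E_irr : forall x, ~ E x x).
Hypothesis E_acyclic : acyclic_graph E.

Lemma acyclic_walk_fresh e p s z :
  uniq [:: e, p & s] -> walk E e (p :: s) -> E e z -> z != p -> z \notin [:: e, p & s].
Proof.
move=> uniq_eps walk_eps Eez zp.
have ze : z != e by apply/eqP => ze; move: Eez; rewrite ze; exact: E_irr.
rewrite !inE (negbTE ze) (negbTE zp) /=; apply/negP => z_s.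
move: uniq_eps walk_eps; case/splitPr: z_s => s1 s2.
have -> : p :: s1 ++ z :: s2 = (p :: rcons s1 z) ++ s2 by rewrite /= cat_rcons.
rewrite -cat_cons cat_uniq => /andP [uniq_cycle _] /walk_cat [walk_path _].
apply: E_acyclic; exists e, (p :: rcons s1 z); split; [done | split].
  by rewrite /= size_rcons.
by rewrite -cats1 walk_cat /= last_rcons; split => //; split => //; apply: E_sym.
Qed.

Lemma acyclic_leaf :
  (exists x y, E x y) -> exists v u, E v u /\ forall u', E v u' -> u' = u.
Proof.
move=> [x0 [y0 E0]]; apply: contrapT => no_leaf.
have second_nbr v u : E v u -> exists2 z, E v z & z != u.
  move=> Evu; apply: contrapT => no_second; apply: no_leaf; exists v, u.
  by split => // u' Evu'; apply: contrapT => u'u; apply: no_second; exists u' => //; apply/eqP.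
have long_path k : exists e p s, [/\ uniq [:: e, p & s], walk E e (p :: s) & size s = k].
  elim: k => [|k [e [p [s [uniq_eps walk_eps <-]]]]].
    exists x0, y0, [::]; split => //=.
    by rewrite inE andbT; apply/eqP => xy; move: E0; rewrite xy; exact: E_irr.
  have [z Eez zp] := second_nbr e p walk_eps.1.
  exists z, e, (p :: s); split => //; last by split => //; apply: E_sym.
  by rewrite cons_uniq uniq_eps andbT acyclic_walk_fresh.
have [e [p [s [uniq_eps _ size_s]]]] := long_path #|T|.
have := max_card (mem [:: e, p & s]); by rewrite (card_uniqP uniq_eps) /= size_s ltnNge leqnSn.
Qed.

End Leaf.

Lemma leaf_edge_count (T : finType) (E : T -> T -> Prop) v u :
  (forall x y, E x y -> E y x) -> (forall x, ~ E x x) ->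
  E v u -> (forall u', E v u' -> u' = u) ->
  \sum_x \sum_y `[< E x y >] = \sum_x \sum_y `[< E x y /\ x <> v /\ y <> v >] + 2.
Proof.
move=> E_sym E_irr Evu leaf_v.
pose E' x y := E x y /\ x <> v /\ y <> v.
have edge_split x y : (`[< E x y >] : nat) = `[< E' x y >]
    + (if x == v then nat_of_bool `[< E x y >] else 0)
    + (if y == v then nat_of_bool `[< E x y >] else 0).
  case: (asboolP (E x y)) => [Exy | nExy]; last by rewrite asboolF ?if_same // => -[].
  have [xv | xv] := eqVneq x v.
    rewrite asboolF; last by case=> _ [].
    by have [yv | //] := eqVneq y v; move: Exy; rewrite xv yv => /E_irr.
  have [yv | yv] := eqVneq y v; first by rewrite asboolF //; case=> _ [].
  by rewrite asboolT //; split => //; split; apply/eqP.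
have deg_v x : (\sum_y if x == v then nat_of_bool `[< E x y >] else 0) = (x == v).
  have [-> | _] := eqVneq x v; last by rewrite big1.
  rewrite (bigD1 u) //= asboolT // big1 // => y yu; rewrite asboolF // => /leaf_v yu'.
  by rewrite yu' eqxx in yu.
under eq_bigr => x _ do under eq_bigr => y _ do rewrite edge_split.
under eq_bigr => x _ do rewrite !big_split /= deg_v -(big_mkcond (pred1 v)) big_pred1_eq.
rewrite !big_split /= -addnA; congr (_ + _).
rewrite (bigD1 v) //= eqxx big1 => [|x /negbTE -> //].
rewrite (bigD1 u) //= (asboolT (E_sym _ _ Evu)) big1 // => x xu.
by rewrite asboolF // => /E_sym /leaf_v xu'; rewrite xu' eqxx in xu.
Qed.

Lemma forest_edge_count (T : finType) (V : T -> Prop) (E : T -> T -> Prop) :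
  (forall x y, E x y -> E y x) -> (forall x, ~ E x x) -> acyclic_graph E ->
  (forall x y, E x y -> V x) -> (exists x, V x) ->
  \sum_x \sum_y `[< E x y >] + 2 <= 2 * \sum_x `[< V x >].
Proof.
have [n] := ubnP (\sum_x `[< V x >]).
elim: n V E => // n IH V E sizeV E_sym E_irr E_acyc EV [x0 Vx0].
have [has_edge | no_edge] := pselect (exists x y, E x y); last first.
  rewrite big1 => [|x _]; first by rewrite (bigD1 x0) //= (asboolT Vx0); lia.
  by apply: big1 => y _; rewrite asboolF // => Exy; apply: no_edge; exists x, y.
have [v [u [Evu leaf_v]]] := acyclic_leaf E_sym E_irr E_acyc has_edge.
pose V' x := V x /\ x <> v.
have count_V : \sum_x `[< V x >] = (\sum_x `[< V' x >]).+1.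
  rewrite (bigD1 v) //= [in RHS](bigD1 v) //= (asboolT (EV _ _ Evu)).
  rewrite (@asboolF (V' v)); last by case.
  congr _.+1; apply: eq_bigr => x /eqP xv.
  by congr (nat_of_bool _); apply: asbool_equiv_eq; rewrite /V'; tauto.
rewrite (leaf_edge_count E_sym E_irr Evu leaf_v) count_V.
suff : \sum_x \sum_y `[< E x y /\ x <> v /\ y <> v >] + 2 <= 2 * \sum_x `[< V' x >] by lia.
apply: IH.
- by move: sizeV; rewrite count_V.
- by move=> x y [Exy [xv yv]]; split; [apply: E_sym | split].
- by move=> x [/E_irr].
- by apply: sub_acyclic E_acyc => x y [].
- by move=> x y [/EV Vx [xv _]].
- exists u; split; first exact: EV (E_sym _ _ Evu).
  by move=> uv; move: Evu; rewrite uv; exact: E_irr.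
Qed.

(* [ext_edge X w] is [bip_edge (fun a b => lang X (a :: rcons w b))] up to conversion. *)
Definition bip_edge (A : Type) (R : A -> A -> Prop) (u v : A + A) : Prop :=
  match u, v with
  | inl a, inr b | inr b, inl a => R a b
  | _, _ => False
  end.

Lemma bipartite_forest_edge_count (A : finType) (R : A -> A -> Prop) (Vl Vr : A -> Prop) :
  acyclic_graph (bip_edge R) -> (forall a b, R a b -> Vl a /\ Vr b) -> (exists a, Vl a) ->
  \sum_a \sum_b `[< R a b >] + 1 <= \sum_a `[< Vl a >] + \sum_b `[< Vr b >].
Proof.
move=> acyc RV [a0 Vla0].
pose V u := match u with inl a => Vl a | inr b => Vr b end.
have sym u v : bip_edge R u v -> bip_edge R v u by case: u v => ? [].
have irr u : ~ bip_edge R u u by case: u => ? [].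
have EV u v : bip_edge R u v -> V u.
  by case: u v => [a|b] [a'|b'] //= => /RV [].
have edges_l : \sum_a \sum_v `[< bip_edge R (inl a) v >] = \sum_a \sum_b `[< R a b >].
  by apply: eq_bigr => a _; rewrite big_sumType /= (asboolF (@id False)) /= big1_eq.
have edges_r : \sum_b \sum_v `[< bip_edge R (inr b) v >] = \sum_a \sum_b `[< R a b >].
  rewrite [RHS]exchange_big; apply: eq_bigr => b _.
  by rewrite big_sumType /= (asboolF (@id False)) /= big1_eq addn0.
have := forest_edge_count sym irr acyc EV (ex_intro _ (inl a0) Vla0).
by rewrite !big_sumType /= edges_l edges_r; lia.
Qed.

Section Factors.
Variable A : finType.
Implicit Types (x : int -> A) (u v w : seq A).

Lemma size_factor x i n : size (factor x i n) = n.
Proof. by rewrite size_map size_iota. Qed.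

Lemma factorD x i n1 n2 :
  factor x i (n1 + n2) = factor x i n1 ++ factor x (i + n1%:Z)%R n2.
Proof.
rewrite /factor iotaD map_cat -[in iota n1 _](addn0 n1) iotaDl -map_comp.
by congr (_ ++ _); apply: eq_map => k /=; rewrite PoszD GRing.addrA.
Qed.

Lemma factor_cons x i n : factor x i n.+1 = x i :: factor x (i + 1)%R n.
Proof. by rewrite -add1n factorD /factor /= GRing.addr0. Qed.

Lemma factor_rcons x i n : factor x i n.+1 = rcons (factor x i n) (x (i + n%:Z)%R).
Proof. by rewrite -addn1 factorD cats1 /factor /= GRing.addr0. Qed.

Lemma nth_factor x i n k y0 : k < n -> nth y0 (factor x i n) k = x (i + k%:Z)%R.
Proof. by move=> lt_kn; rewrite (nth_map 0) ?size_iota // nth_iota. Qed.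

Lemma eq_factor x y i j n :
  (forall k, k < n -> x (i + k%:Z)%R = y (j + k%:Z)%R) -> factor x i n = factor y j n.
Proof. by move=> eq_xy; apply/eq_in_map => k; rewrite mem_iota => /eq_xy. Qed.

Definition occurs x w := exists i, w = factor x i (size w).

Definition factor_closed (L : seq A -> Prop) := forall u v, L (u ++ v) -> L u /\ L v.

Definition extendable (L : seq A -> Prop) :=
  forall w, L w -> (exists a, L (a :: w)) /\ (exists b, L (rcons w b)).

Lemma factor_closed_cons L a w : factor_closed L -> L (a :: w) -> L w.
Proof. by move=> L_fact /(L_fact [:: a]) []. Qed.

Lemma factor_closed_rcons L w b : factor_closed L -> L (rcons w b) -> L w.
Proof. by move=> L_fact; rewrite -cats1 => /L_fact []. Qed.

Lemma occurs_factor_closed x : factor_closed (occurs x).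
Proof.
move=> u v [i]; rewrite size_cat factorD => /eqP; rewrite eqseq_cat ?size_factor //.
by case/andP => /eqP def_u /eqP def_v; split; [exists i | exists (i + (size u)%:Z)%R].
Qed.

Lemma occurs_extendable x : extendable (occurs x).
Proof.
move=> w [i def_w]; split.
  by exists (x (i - 1)%R), (i - 1)%R; rewrite /= factor_cons GRing.subrK -def_w.
by exists (x (i + (size w)%:Z)%R), i; rewrite size_rcons factor_rcons -def_w.
Qed.

Lemma lang_factor_closed (X : (int -> A) -> Prop) : factor_closed (lang X).
Proof.
move=> u v [x [i [Xx uv_x]]].
have [[j def_u] [k def_v]] := occurs_factor_closed (ex_intro _ i uv_x).
by split; exists x; [exists j | exists k].
Qed.

Lemma extendable_size L : extendable L -> L [::] -> forall n, exists2 w, L w & size w = n.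
Proof.
move=> L_ext L0; elim=> [|n [w Lw <-]]; first by exists [::].
by have [_ [b Lwb]] := L_ext w Lw; exists (rcons w b); rewrite ?size_rcons.
Qed.

Lemma factor_closed_right_max (F : seq A -> Prop) w q : F w -> ~ F (w ++ q) ->
  exists q1 b q2, [/\ q = q1 ++ b :: q2, F (w ++ q1) & ~ F (rcons (w ++ q1) b)].
Proof.
elim: q w => [|c q IH] w Fw; first by rewrite cats0.
have [Fwc | nFwc] := pselect (F (rcons w c)); last first.
  by move=> _; exists [::], c, q; rewrite cats0.
rewrite -cat_rcons => /(IH _ Fwc) [q1 [b [q2 [-> Fwq1 nFb]]]].
by exists (c :: q1), b, q2; split => //; rewrite -cat_rcons.
Qed.

Lemma factor_closed_left_max (F : seq A -> Prop) p w : F w -> ~ F (p ++ w) ->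
  exists p2 a p1, [/\ p = p2 ++ a :: p1, F (p1 ++ w) & ~ F (a :: p1 ++ w)].
Proof.
elim/last_ind: p w => [|p c IH] w Fw; first by [].
have [Fcw | nFcw] := pselect (F (c :: w)); last first.
  by move=> _; exists p, c, [::]; rewrite cats1.
rewrite cat_rcons => /(IH _ Fcw) [p2 [a [p1 [-> Fp1w nFa]]]].
by exists p2, a, (rcons p1 c); split; rewrite ?rcons_cat ?cat_rcons.
Qed.

Lemma bispecial_window (L F : seq A -> Prop) p w q :
  factor_closed L -> factor_closed F -> L (p ++ w ++ q) -> F w -> ~ F p -> ~ F q ->
  exists w' a b, [/\ size w <= size w', F w', L (a :: rcons w' b),
                     ~ F (a :: w') & ~ F (rcons w' b)].
Proof.
move=> L_fact F_fact Lpwq Fw nFp nFq.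
have [q1 [b [q2 [def_q Fwq1 nFb]]]] :=
  factor_closed_right_max Fw (fun Fwq => nFq (F_fact _ _ Fwq).2).
have [p2 [a [p1 [def_p Fw' nFa]]]] :=
  factor_closed_left_max Fwq1 (fun Fpw => nFp (F_fact _ _ Fpw).1).
exists (p1 ++ w ++ q1), a, b; split => //.
- by rewrite !size_cat; lia.
- move: Lpwq; rewrite def_p def_q.
  have -> : (p2 ++ a :: p1) ++ w ++ q1 ++ b :: q2 = p2 ++ (a :: rcons (p1 ++ w ++ q1) b) ++ q2.
    by rewrite -!catA /= -!cats1 -!catA.
  by case/L_fact => _ /L_fact [].
- by rewrite rcons_cat => /F_fact [].
Qed.

End Factors.

Section Words.
Variable A : finType.

Fixpoint words (n : nat) : seq (seq A) :=
  if n is n'.+1 then [seq rcons w b | w <- words n', b <- index_enum A] else [:: [::]].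

Lemma mem_words n w : (w \in words n) = (size w == n).
Proof.
elim: n w => [|n IH] w; first by rewrite inE size_eq0.
apply/allpairsP/idP => [[[v b] /= [v_n _ ->]] | /eqP].
  by rewrite size_rcons eqSS -IH.
case/lastP: w => [//|v b]; rewrite size_rcons => -[v_n].
by exists (v, b); rewrite IH v_n mem_index_enum.
Qed.

Lemma big_words_rcons n (f : seq A -> nat) :
  \sum_(v <- words n.+1) f v = \sum_(w <- words n) \sum_b f (rcons w b).
Proof. exact: big_allpairs_dep. Qed.

Lemma big_words_cons n (f : seq A -> nat) :
  \sum_(v <- words n.+1) f v = \sum_(w <- words n) \sum_a f (a :: w).
Proof.
elim: n f => [|n IH] f; first by rewrite big_words_rcons !big_seq1.
by rewrite big_words_rcons IH big_words_rcons; apply: eq_bigr => w _; rewrite exchange_big.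
Qed.

End Words.

Lemma no_infinite_descent (Psi N : nat -> nat) m :
  (forall n, m <= n -> Psi n.+1 + N n <= Psi n) -> ~ (forall k, exists2 n, k <= n & 0 < N n).
Proof.
move=> step often_pos.
have Psi_mono d n : m <= n -> Psi (n + d) <= Psi n.
  move=> le_mn; elim: d => [|d IH]; first by rewrite addn0.
  by have := step (n + d); rewrite addnS; lia.
have Psi_drop j : exists2 n, m <= n & Psi n + j <= Psi m.
  elim: j => [|j [n le_mn drop_n]]; first by exists m; rewrite ?addn0.
  have [n' le_nn' pos_n'] := often_pos n.
  exists n'.+1; first lia.
  by have := step n'; have := Psi_mono (n' - n) n le_mn; rewrite subnKC //; lia.
by have [n _] := Psi_drop (Psi m).+1; lia.
Qed.

Lemma edge_weight_le (fa fb fab lab : bool) : (fab -> fa) -> (fab -> fb) -> (fab -> lab) ->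
  fb * (lab && ~~ fab) + fa * (lab && ~~ fab) + [&& lab, ~~ fa & ~~ fb] + 2 * fab
  <= lab + [&& lab, fa & fb].
Proof.
by case: fab => [/(_ isT) -> /(_ isT) -> /(_ isT) ->|_ _ _]; case: fa; case: fb; case: lab.
Qed.

Section Complexity.
Variables (A : finType) (L F : seq A -> Prop).
Hypotheses (L_fact : factor_closed L) (F_fact : factor_closed F) (F_ext : extendable F).
Hypothesis F_sub_L : forall w, F w -> L w.
Variable m : nat.
Hypothesis ext_acyclic :
  forall w, F w -> m <= size w -> acyclic_graph (bip_edge (fun a b => L (a :: rcons w b))).

Definition missing_left w := \sum_a (`[< L (a :: w) >] && ~~ `[< F (a :: w) >]).
Definition missing_right w := \sum_b (`[< L (rcons w b) >] && ~~ `[< F (rcons w b) >]).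
Definition outer_edges w :=
  \sum_a \sum_b [&& `[< L (a :: rcons w b) >], ~~ `[< F (a :: w) >] & ~~ `[< F (rcons w b) >]].

Definition complexity n := \sum_(w <- words A n) `[< F w >].
Definition missing n := \sum_(w <- words A n) `[< F w >] * (missing_left w + missing_right w).
Definition outer n := \sum_(w <- words A n) `[< F w >] * outer_edges w.

Lemma ext_forest_lang w : F w -> m <= size w ->
  \sum_a \sum_b `[< L (a :: rcons w b) >] + 1
  <= \sum_a `[< L (a :: w) >] + \sum_b `[< L (rcons w b) >].
Proof.
move=> Fw size_w; have [[a0 Fa0] _] := F_ext Fw.
apply: bipartite_forest_edge_count (ext_acyclic Fw size_w) _ _; last first.
  by exists a0; apply: F_sub_L.
move=> a b Lawb; split; last exact: factor_closed_cons L_fact Lawb.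
exact: (factor_closed_rcons (w := a :: w) L_fact Lawb).
Qed.

Lemma ext_forest_sublang w : F w -> m <= size w ->
  \sum_a \sum_b `[< L (a :: rcons w b) /\ F (a :: w) /\ F (rcons w b) >] + 1
  <= \sum_a `[< F (a :: w) >] + \sum_b `[< F (rcons w b) >].
Proof.
move=> Fw size_w; have [[a0 Fa0] _] := F_ext Fw.
apply: bipartite_forest_edge_count; last by exists a0.
  by apply: sub_acyclic (ext_acyclic Fw size_w) => -[a|b] [a'|b'] //= [].
by move=> a b [_ []].
Qed.

Lemma ext_lang_split w :
  \sum_a `[< L (a :: w) >] + \sum_b `[< L (rcons w b) >]
  = \sum_a `[< F (a :: w) >] + \sum_b `[< F (rcons w b) >] + (missing_left w + missing_right w).
Proof.
have split_F v : `[< L v >] = `[< F v >] + (`[< L v >] && ~~ `[< F v >]) :> nat.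
  by case: (asboolP (F v)) => [/F_sub_L/asboolT -> | _]; rewrite ?andbT.
rewrite /missing_left /missing_right (eq_bigr _ (fun a _ => split_F (a :: w))).
rewrite [X in _ + X](eq_bigr _ (fun b _ => split_F (rcons w b))) !big_split /=; lia.
Qed.

(* Each edge (a, b) of E_1(w) is charged at most twice: if awb is outside F, once as a
   missing extension of each of aw, wb lying in F (or as an outer edge if neither does);
   if awb is in F, twice, and it is then an edge of both forests. *)
Lemma ext_edges_weight w :
  \sum_b `[< F (rcons w b) >] * missing_left (rcons w b)
  + \sum_a `[< F (a :: w) >] * missing_right (a :: w)
  + outer_edges w + 2 * \sum_a \sum_b `[< F (a :: rcons w b) >]
  <= \sum_a \sum_b `[< L (a :: rcons w b) >]
     + \sum_a \sum_b `[< L (a :: rcons w b) /\ F (a :: w) /\ F (rcons w b) >].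
Proof.
rewrite /missing_left /missing_right /outer_edges.
under eq_bigr do rewrite big_distrr.
rewrite exchange_big /=.
under [X in _ + X + _ + _]eq_bigr do rewrite big_distrr.
rewrite big_distrr -!big_split /=; apply: leq_sum => a _.
rewrite big_distrr -!big_split /=; apply: leq_sum => b _.
rewrite !asbool_and; apply: edge_weight_le => /asboolP Fawb; apply/asboolP.
- exact: (factor_closed_rcons (w := a :: w) F_fact Fawb).
- exact: factor_closed_cons F_fact Fawb.
- exact: F_sub_L.
Qed.

Lemma ext_count_le w : m <= size w ->
  \sum_b `[< F (rcons w b) >] * missing_left (rcons w b)
  + \sum_a `[< F (a :: w) >] * missing_right (a :: w)
  + `[< F w >] * outer_edges w + 2 * \sum_a \sum_b `[< F (a :: rcons w b) >] + 2 * `[< F w >]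
  <= 2 * \sum_a `[< F (a :: w) >] + 2 * \sum_b `[< F (rcons w b) >]
     + `[< F w >] * (missing_left w + missing_right w).
Proof.
move=> size_w; have [Fw | nFw] := asboolP (F w).
  have := ext_forest_lang Fw size_w; have := ext_forest_sublang Fw size_w.
  have := ext_edges_weight w; rewrite ext_lang_split !mul1n; lia.
have nFr b : ~ F (rcons w b) by move/(factor_closed_rcons F_fact).
have -> : \sum_b `[< F (rcons w b) >] * missing_left (rcons w b) = 0.
  by apply: big1 => b _; rewrite asboolF.
have -> : \sum_a `[< F (a :: w) >] * missing_right (a :: w) = 0.
  by apply: big1 => a _; rewrite asboolF // => /(factor_closed_cons F_fact).
have -> : \sum_a \sum_b `[< F (a :: rcons w b) >] = 0.
  by apply: big1 => a _; apply: big1 => b _; rewrite asboolF // => /(factor_closed_cons F_fact)/nFr.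
by rewrite !mul0n.
Qed.

Lemma complexity_step n : m <= n ->
  missing n.+1 + outer n + 2 * complexity n.+2 + 2 * complexity n
  <= 4 * complexity n.+1 + missing n.
Proof.
move=> le_mn.
have missingS : missing n.+1 =
    \sum_(w <- words A n) \sum_b `[< F (rcons w b) >] * missing_left (rcons w b)
    + \sum_(w <- words A n) \sum_a `[< F (a :: w) >] * missing_right (a :: w).
  rewrite /missing (eq_bigr _ (fun v _ => mulnDr _ _ _)) big_split /=.
  by rewrite big_words_rcons big_words_cons.
have complexityS_cons : complexity n.+1 = \sum_(w <- words A n) \sum_a `[< F (a :: w) >].
  exact: big_words_cons.
have complexityS_rcons : complexity n.+1 = \sum_(w <- words A n) \sum_b `[< F (rcons w b) >].
  exact: big_words_rcons.
have complexitySS :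
    complexity n.+2 = \sum_(w <- words A n) \sum_a \sum_b `[< F (a :: rcons w b) >].
  by rewrite /complexity big_words_rcons big_words_cons.
have le_m_size w : w \in words A n -> m <= size w by rewrite mem_words => /eqP ->.
have := @leq_sum _ (words A n) _ _ _ (fun w w_n => ext_count_le (le_m_size w w_n)).
rewrite -!big_seq !big_split big1_eq /= -/(complexity n) -/(outer n) -/(missing n).
rewrite missingS complexitySS; lia.
Qed.

Lemma complexity_mono n : complexity n <= complexity n.+1.
Proof.
rewrite /complexity big_words_rcons; apply: leq_sum => w _.
case: (asboolP (F w)) => // Fw; have [_ [b Fwb]] := F_ext Fw.
by rewrite (bigD1 b) //= (asboolT Fwb).
Qed.

Hypothesis L_irr : forall u v, L u -> L v -> exists w, L (u ++ w ++ v).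
Hypothesis F_nil : F [::].

Lemma outer_unbounded u : L u -> ~ F u -> forall k, exists2 n, k <= n & 0 < outer n.
Proof.
move=> Lu nFu k.
have [w Fw size_w] := extendable_size F_ext F_nil k.
have [z1 Luw] := L_irr Lu (F_sub_L Fw).
have [z2 Luwu] := L_irr Luw Lu.
have [w' [a [b [size_w' Fw' Lawb nFa nFb]]]] :
    exists w' a b, [/\ size w <= size w', F w', L (a :: rcons w' b),
                      ~ F (a :: w') & ~ F (rcons w' b)].
  apply: (bispecial_window (p := u ++ z1) (q := z2 ++ u) L_fact F_fact _ Fw).
  - by move: Luwu; rewrite -!catA.
  - by move/F_fact => [].
  - by move/F_fact => [].
exists (size w'); first by rewrite -size_w.
rewrite /outer (big_rem w') ?mem_words //= (asboolT Fw') mul1n.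
rewrite /outer_edges (bigD1 a) //= (bigD1 b) //= (asboolT Lawb) (asboolF nFa) (asboolF nFb).
by [].
Qed.

Theorem sublanguage_eq u : L u -> F u.
Proof.
move=> Lu; apply: contrapT => nFu.
pose Psi n := missing n + 2 * (complexity n.+1 - complexity n).
apply: (@no_infinite_descent Psi outer m _ (outer_unbounded Lu nFu)) => n le_mn.
have := complexity_step le_mn; have := complexity_mono n; have := complexity_mono n.+1.
rewrite /Psi; lia.
Qed.

End Complexity.

Section Shifts.
Variable A : finType.
Implicit Types (X : (int -> A) -> Prop) (x y z : int -> A).

Lemma shift_space_translate X x (k : int) : shift_space X -> X x -> X (fun i => x (i + k)%R).
Proof.
move=> [_ [X_shift X_unshift]].
have X_ext z z' : z =1 z' -> X z -> X z' by move=> /funext ->.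
have up z n : X z -> X (fun i => z (i + n%:Z)%R).
  elim: n => [|n IH] Xz; first by apply: X_ext Xz => i; rewrite GRing.addr0.
  by apply: X_ext (X_shift _ (IH Xz)) => i; rewrite /shift; congr z; lia.
have down z n : X z -> X (fun i => z (i - n%:Z)%R).
  elim: n => [|n IH] Xz; first by apply: X_ext Xz => i; rewrite GRing.subr0.
  have [z' [Xz' def_z']] := X_unshift _ (IH Xz); apply: X_ext Xz' => i.
  have := congr1 (fun f => f (i - 1)%R) def_z'; rewrite /shift /= GRing.subrK => ->.
  by congr z; lia.
move=> Xx; case: k => n; first exact: up.
by apply: X_ext (down x n.+1 Xx) => i; rewrite NegzE.
Qed.

Lemma occurs_lang_minimal X : shift_space X -> (exists x, X x) ->
  (forall y, X y -> forall u, lang X u -> occurs y u) -> minimal X.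
Proof.
move=> X_shift X_ne occurs_all; split => // Y Y_shift [y Yy] YX x Xx.
have [Y_closed _] := Y_shift.
apply: Y_closed => n.
pose u := factor x (- n%:Z)%R (n + n).+1.
have [j def_u] : occurs y u.
  by apply: (occurs_all _ (YX _ Yy)); exists x, (- n%:Z)%R; rewrite size_factor.
exists (fun i => y (i + (j + n%:Z))%R).
split; first exact: (shift_space_translate (j + n%:Z)%R Y_shift Yy).
move=> i le_i_n; have [k def_k] : exists k : nat, (i + n%:Z = k%:Z)%R.
  by exists (absz (i + n%:Z)%R); lia.
have lt_k : k < (n + n).+1 by lia.
have := nth_factor x (- n%:Z)%R (x 0%R) lt_k; rewrite -/u def_u size_factor nth_factor //.
have -> : (- n%:Z + k%:Z = i)%R by lia.
by have -> : (i + (j + n%:Z) = j + k%:Z)%R by lia.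
Qed.

End Shifts.

Lemma ex_uniform_bound (T : finType) (P : T -> int -> Prop) :
  (forall t, exists M, forall c, (M <= c)%R -> P t c) ->
  exists M, forall t c, (M <= c)%R -> P t c.
Proof.
move=> bound; suff [M bound_M] : exists M, forall t, t \in enum T -> forall c, (M <= c)%R -> P t c.
  by exists M => t; apply: bound_M; rewrite mem_enum.
elim: (enum T) => [|t s [M bound_M]]; first by exists 0%R.
have [Mt bound_t] := bound t.
exists (Num.max M Mt) => t'; rewrite inE => /orP [/eqP -> | t'_s] c;
  rewrite ge_max => /andP [le_M le_Mt]; [exact: bound_t | exact: bound_M].
Qed.

Section OmegaLimit.
Variables (A : finType) (x : int -> A).

Definition window_recurs (n : nat) (z : int -> A) :=
  forall M : int, exists2 c, (M <= c)%R & forall i : int, `|i|%N < n -> z i = x (c + i)%R.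

Definition extend_window (z : int -> A) (n : nat) (a b : A) : int -> A :=
  fun i => if i == (- n%:Z)%R then a else if i == (n%:Z)%R then b else z i.

Lemma window_recurs_extend n z : window_recurs n z ->
  exists ab : A * A, window_recurs n.+1 (extend_window z n ab.1 ab.2).
Proof.
move=> rec_z; apply: contrapT => no_ext.
have [M bad_M] : exists M, forall (ab : A * A) c, (M <= c)%R ->
    ~ (forall i, `|i|%N < n.+1 -> extend_window z n ab.1 ab.2 i = x (c + i)%R).
  apply: ex_uniform_bound => ab; apply: contrapT => not_ev; apply: no_ext; exists ab => M.
  apply: contrapT => no_c; apply: not_ev; exists M => c le_Mc match_c; apply: no_c.
  by exists c.
have [c le_Mc match_c] := rec_z M.
apply: (bad_M (x (c - n%:Z)%R, x (c + n%:Z)%R) c le_Mc) => i lt_i /=.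
rewrite /extend_window; case: eqP => [-> // | ni]; case: eqP => [-> // | pi].
by apply: match_c; lia.
Qed.

(* Koenig's lemma: grow a recurrent window two letters at a time. *)
Lemma omega_limit_nonempty : exists z, forall n, window_recurs n z.
Proof.
have ext_ex n z : exists ab : A * A,
    window_recurs n z -> window_recurs n.+1 (extend_window z n ab.1 ab.2).
  have [/window_recurs_extend [ab ?] | not_rec] := pselect (window_recurs n z).
    by exists ab.
  by exists (x 0%R, x 0%R) => /not_rec.
pose ext n z := sval (cid (ext_ex n z)).
pose fix approx n :=
  if n is k.+1 then extend_window (approx k) k (ext k (approx k)).1 (ext k (approx k)).2
  else fun _ => x 0%R.
have approx_recurs n : window_recurs n (approx n).
  elim: n => [|n IH]; first by move=> M; exists M.
  exact: (svalP (cid (ext_ex n (approx n))) IH).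
have approx_stable n k i : `|i|%N < n -> approx (n + k) i = approx n i.
  move=> lt_i; elim: k => [|k IH]; first by rewrite addn0.
  rewrite addnS /= /extend_window.
  have -> : (i == (- (n + k)%:Z)%R) = false by apply/eqP; lia.
  by have -> : (i == ((n + k)%:Z)%R) = false by apply/eqP; lia.
exists (fun i => approx `|i|.+1 i) => n M.
have [c le_Mc match_c] := approx_recurs n M.
exists c => // i lt_i; rewrite -match_c //.
by rewrite -(subnKC lt_i) approx_stable.
Qed.

Lemma window_recurs_translate n z (k : int) :
  window_recurs (n + `|k|%N) z -> window_recurs n (fun i => z (i + k)%R).
Proof.
move=> rec_z M; have [c le_c match_c] := rec_z (M - k)%R.
exists (c + k)%R; first lia.
by move=> i lt_i; rewrite match_c; [congr x; lia | lia].
Qed.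

End OmegaLimit.

Lemma minimal_irreducible (A : finType) (X : (int -> A) -> Prop) :
  shift_space X -> minimal X -> irreducible X.
Proof.
move=> X_shift [_ X_min] u v [x [i [Xx def_u]]] [y [j [Xy def_v]]].
pose Y z := forall n, window_recurs x n z.
have Y_sub z : Y z -> X z.
  move=> Yz; have [X_closed _] := X_shift; apply: X_closed => n.
  have [c _ match_c] := Yz n.+1 0%R.
  exists (fun k => x (k + c)%R); split; first exact: (shift_space_translate c X_shift Xx).
  by move=> k le_k; rewrite match_c // GRing.addrC.
have Y_shift : shift_space Y.
  split; first move=> z approx_z n M.
    have [z' [Yz' eq_z']] := approx_z n; have [c le_c match_c] := Yz' n M.
    by exists c => // k lt_k; rewrite -eq_z' ?match_c //; lia.
  split=> [z Yz n | z Yz]; first exact: (window_recurs_translate (k := 1%R)).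
  exists (fun k => z (k - 1)%R); split; last by rewrite funeqE => k; rewrite /shift GRing.addrK.
  by move=> n; apply: (window_recurs_translate (k := (-1)%R)).
have [z Yz] := omega_limit_nonempty x.
have [c le_c match_c] := X_min Y Y_shift (ex_intro _ z Yz) Y_sub y Xy
  (`|j|%N + size v).+1 (i + (size u)%:Z - j)%R.
have [d def_d] : exists d : nat, (c + j = i + (size u)%:Z + d%:Z)%R.
  by exists (absz (c + j - (i + (size u)%:Z))%R); lia.
exists (factor x (i + (size u)%:Z)%R d), x, i; split => //.
rewrite !size_cat size_factor !factorD -def_u -def_d; congr (_ ++ (_ ++ _)).
rewrite {1}def_v; apply: eq_factor => k lt_k.
by rewrite match_c; [congr x; lia | lia].
Qed.

Theorem mainTheorem13 (A : finType) (X : (int -> A) -> Prop) :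
  shift_space X -> (exists x, X x) -> eventually_dendric X ->
  (minimal X <-> irreducible X).
Proof.
move=> X_shift X_ne [m dendric]; split; first exact: minimal_irreducible.
move=> X_irr; apply: occurs_lang_minimal => // y Xy u Lu.
have occurs_lang w : occurs y w -> lang X w by move=> [k def_w]; exists y, k.
apply: (sublanguage_eq (@lang_factor_closed _ X) (@occurs_factor_closed _ y)
  (@occurs_extendable _ y) occurs_lang (m := m) _ X_irr _ Lu).
- by move=> w /occurs_lang Lw m_w; have [_] := dendric w Lw m_w.
- by exists 0%R.
Qed.
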